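(* Let $r_1,\dots,r_n$ be establishment records with nonnegative confidential attributes $A_1,\dots,A_m$, let $\psi$ be a neighbor function with distance parameters $\sigma_1,\dots,\sigma_m>0$, and let $\mu_1,\dots,\mu_m>0$. For $j=1,\dots,n$ and $i=1,\dots,m$ define the noisy values $o_{j,i}=\psi(r_j[A_i])+Z_{j,i}$ where the $Z_{j,i}\sim N(0,\sigma_i^2/\mu_i^2)$ are independent. Let $\beta\in(0,1)$, define $\tau=\Phi^{-1}\big((1-\beta)^{1/(mn)}\big)$, and define $u_{j,i}=\psi^{-1}\big(o_{j,i}+\sigma_i\tau/\mu_i\big)$. Then with probability $1-\beta$ the inequalities $r_j[A_i]\leq u_{j,i}$ hold simultaneously for all $j$ and $i$.
   Context: $\Phi$ denotes the standard normal CDF. A neighbor function is a function $\psi:\mathbb{R}_{\geq 0}\to\mathbb{R}$ that is strictly increasing, continuous, concave, and such that $x\mapsto\psi(e^{x})$ is convex; $\psi^{-1}$ denotes its inverse. $r_j[A_i]\geq 0$ denotes the value of confidential attribute $A_i$ in record $r_j$. *)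

From HB Require Import structures.
From mathcomp Require Import all_boot all_order all_algebra.
From mathcomp Require Import all_classical all_reals all_analysis.
Set Implicit Arguments. Unset Strict Implicit. Unset Printing Implicit Defensive.
Import Order.TTheory GRing.Theory Num.Theory.
Import numFieldNormedType.Exports.
Local Open Scope classical_set_scope.
Local Open Scope ring_scope.

Definition Phi {R : realType} (x : R) : R :=
  fine (normal_prob 0 1 `]-oo, x]).

(* Neighbor function psi : R_{>=0} -> R (values of psi on negative reals are
   irrelevant): strictly increasing, continuous, concave on [0,+oo), and
   x |-> psi (e^x) convex on R. *)
Definition neighbor_function {R : realType} (psi : R -> R) : Prop :=
  [/\ (forall x y, 0 <= x -> x < y -> psi x < psi y),
      {within `[0, +oo[, continuous psi},
      (forall x y (t : R), 0 <= x -> 0 <= y -> 0 <= t <= 1 ->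
          t * psi x + (1 - t) * psi y <= psi (t * x + (1 - t) * y)) &
      (forall x y (t : R), 0 <= t <= 1 ->
          psi (expR (t * x + (1 - t) * y)) <= t * psi (expR x) + (1 - t) * psi (expR y))].

(* On the range of psi this is the
   ordinary inverse psi^{-1}(y); below the range it is -oo, above it +oo. *)
Definition psi_inv {R : realType} (psi : R -> R) (y : R) : \bar R :=
  ereal_sup [set x%:E | x in [set x : R | 0 <= x /\ psi x <= y]].

(* Mutual independence of a finite family of real random variables:
   product rule for every choice of Borel sets (taking B k = setT for the
   indices outside a subfamily gives the product rule for every subfamily). *)
Definition mutually_independent {R : realType} {d} {T : measurableType d}
    (P : probability T R) (I : finType) (X : I -> T -> R) : Prop :=
  forall B : I -> set R, (forall k, measurable (B k)) ->
    P (\bigcap_(k in [set: I]) (X k @^-1` B k)) =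
    (\prod_(k : I) fine (P (X k @^-1` B k)))%:E.

From HB Require Import structures.
From mathcomp Require Import all_boot all_order all_algebra.
From mathcomp Require Import all_classical all_reals all_analysis.
From mathcomp Require Import lra ring.
Set Implicit Arguments. Unset Strict Implicit. Unset Printing Implicit Defensive.
Import Order.TTheory GRing.Theory Num.Theory.
Import numFieldNormedType.Exports.
Local Open Scope classical_set_scope.
Local Open Scope ring_scope.

(* Since psi is increasing, r <= psi^{-1}(psi r + Z + sigma tau / mu) holds exactly
   when Z >= -(sigma / mu) tau, an event of probability Phi tau because
   Z ~ N(0, (sigma / mu)^2).  By independence the m n events occur
   simultaneously with probability (Phi tau)^(m n) = 1 - beta. *)

Section psi_inverse.
Variables (R : realType) (psi : R -> R).
Hypothesis psi_incr : forall x y, 0 <= x -> x < y -> psi x < psi y.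
Hypothesis psi_cont : {within `[0, +oo[, continuous psi}.

(* Continuity at r: if y < psi r, then psi > y on a neighbourhood [r - e, r]
   of r, so the sup defining psi_inv stays below r - e. *)
Lemma psi_inv_lt (r y : R) : 0 <= r -> y < psi r -> (psi_inv psi y < r%:E)%E.
Proof.
move=> r0 yr.
have cr : psi @ within `[0, +oo[%classic (nbhs r) --> psi r.
  by rewrite nbhs_subspace_in ?inE/= ?in_itv/= ?r0//; exact: psi_cont.
have [e /= e0 psi_gt] := (nbhs_ballP _ _).1 (cvgr_gt _ cr _ yr).
apply: (@le_lt_trans _ _ (r - e)%:E); last by rewrite lte_fin ltrBlDr ltrDl.
apply: ub_ereal_sup => _ [x [x0 xy] <-]; rewrite lee_fin.
have xr : x < r.
  rewrite ltNge; apply/negP => rx.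
  have psi_rx : psi r <= psi x.
    by case: ltgtP rx => // [rx _|<-]; [exact/ltW/psi_incr|].
  by move: (le_lt_trans (le_trans psi_rx xy) yr); rewrite ltxx.
rewrite leNgt; apply/negP => rex.
have : ball r e x.
  by rewrite /ball /= ger0_norm ?subr_ge0 ?ltW // ltrBlDr addrC -ltrBlDr.
by move=> /psi_gt; rewrite /= in_itv /= x0 => /(_ isT); rewrite ltNge xy.
Qed.

Lemma le_psi_inv (r y : R) : 0 <= r -> ((r%:E <= psi_inv psi y)%E <-> psi r <= y).
Proof.
move=> r0; split => [le_r|psi_r].
  by rewrite leNgt; apply/negP => /(psi_inv_lt r0); rewrite ltNge le_r.
by apply: ereal_sup_ubound; exists r.
Qed.

End psi_inverse.

(* For s = 0, normal_pdf 0 s is the indicator of [0, 1], which is not even. *)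
Lemma normal_pdfN (R : realType) (s x : R) : s != 0 ->
  normal_pdf 0 s (- x) = normal_pdf 0 s x.
Proof.
move=> s0; rewrite normal_pdfE //.
by change (normal_peak s * normal_fun 0 s (- x) = normal_peak s * normal_fun 0 s x);
  rewrite /normal_fun !subr0 sqrrN.
Qed.

Lemma normal_pdf_scale (R : realType) (s x : R) : 0 < s ->
  normal_pdf 0 s x = normal_pdf 0 1 (x / s) / s.
Proof.
move=> s0; rewrite !normal_pdfE ?oner_neq0 ?gt_eqF //=.
have peakE : normal_peak s = normal_peak 1 / s.
  rewrite /normal_peak expr1n mul1r -invfM; congr (_^-1).
  by rewrite -mulrnAr sqrtrM ?sqr_ge0 // sqrtr_sqr ger0_norm ?ltW // mulrC.
have funE : normal_fun 0 s x = normal_fun 0 1 (x / s).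
  by rewrite /normal_fun; congr expR; rewrite expr1n; field; rewrite gt_eqF.
change (normal_peak s * normal_fun 0 s x =
  normal_peak 1 * normal_fun 0 1 (x / s) / s).
by rewrite peakE funE mulrAC.
Qed.

(* The substitution x |-> -(x / s) maps [-(s t), +oo[ decreasingly onto ]-oo, t]. *)
Lemma normal_prob_upper_tail (R : realType) (s t : R) : 0 < s ->
  normal_prob 0 s `[-(s * t), +oo[ = normal_prob 0 1 `]-oo, t].
Proof.
move=> s0; pose F x : R := - (x / s).
have FE : F = - ((@id R) * cst s^-1) by apply/funext.
have dF (x : R) : is_derive x (1 : R) F (- s^-1).
  rewrite FE; apply: is_deriveN; apply: is_derive_eq.
  by rewrite scaler0 add0r; exact: mulr1.
have F'E : F^`()%classic = cst (- s^-1).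
  by apply/funext => x; rewrite derive1E derive_val.
have Fa : F (- (s * t)) = t by rewrite /F; field; rewrite gt_eqF.
rewrite /normal_prob -[in RHS]Fa decreasing_ge0_integration_by_substitutiony.
- apply: eq_integral => x _; rewrite F'E /= opprK normal_pdf_scale //.
  by rewrite /F !fctE normal_pdfN ?oner_neq0.
- by move=> x y _ _ xy; rewrite /F ltrN2 ltr_pM2r ?invr_gt0.
- by rewrite F'E => x _; exact: cst_continuous.
- by rewrite F'E; exact: is_cvg_cst.
- by rewrite F'E; exact: is_cvg_cst.
- split; first by move=> x _; exact: ex_derive.
  apply: cvg_at_right_filter; rewrite FE; apply: cvgN.
  by apply: cvgM; [exact: cvg_id|exact: cvg_cst].
- by rewrite FE; apply/cvgNrNy; apply: gt0_cvgMly; rewrite ?invr_gt0 //; exact: cvg_id.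
- by apply: continuous_subspaceT; exact/continuous_normal_pdf/oner_neq0.
- by move=> x _; exact: normal_pdf_ge0.
Qed.

Lemma normal_rv_upper_tail (R : realType) (d : measure_display)
    (T : measurableType d) (P : probability T R) (X : {RV P >-> R}) (s t : R) :
  0 < s -> (forall A, measurable A -> distribution P X A = normal_prob 0 s A) ->
  fine (P (X @^-1` `[-(s * t), +oo[)) = Phi t.
Proof.
move=> s0 distX.
by rewrite -[P _]/(distribution P X _) distX // normal_prob_upper_tail.
Qed.

Lemma exprn_powR_natrV (R : realType) (a : R) (k : nat) : 0 <= a -> k != 0%N ->
  (a `^ k%:R^-1) ^+ k = a.
Proof.
move=> a0 k0.
by rewrite -powR_mulrn ?powR_ge0 // -powRrM mulVf ?powRr1 // pnatr_eq0.
Qed.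

Theorem theorem6p7 (R : realType) (d : measure_display) (T : measurableType d)
    (P : probability T R) (n m : nat) (r : 'I_n -> 'I_m -> R) (psi : R -> R)
    (sigma mu : 'I_m -> R) (Z : 'I_n -> 'I_m -> {RV P >-> R}) (beta tau : R) :
  (0 < n)%N -> (0 < m)%N ->
  (forall j i, 0 <= r j i) ->
  neighbor_function psi ->
  (forall i, 0 < sigma i) -> (forall i, 0 < mu i) ->
  mutually_independent P (fun k : 'I_n * 'I_m => (Z k.1 k.2 : T -> R)) ->
  (forall j i (A : set R), measurable A ->
     distribution P (Z j i) A = normal_prob 0 (sigma i / mu i) A) ->
  0 < beta < 1 ->
  Phi tau = (1 - beta) `^ ((m * n)%:R)^-1 ->
  let o j i (w : T) := psi (r j i) + Z j i w in
  let u j i (w : T) := psi_inv psi (o j i w + sigma i * tau / mu i) in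
  P [set w | forall j i, ((r j i)%:E <= u j i w)%E] = (1 - beta)%:E.
Proof.
move=> n0 m0 r0 [psi_incr psi_cont _ _] sigma0 mu0 indepZ distZ beta01 Phi_tau o u.
pose B (k : 'I_n * 'I_m) : set R := `[- (sigma k.2 / mu k.2 * tau), +oo[%classic.
have le_u j i w : ((r j i)%:E <= u j i w)%E <-> B (j, i) (Z j i w).
  rewrite (le_psi_inv psi_incr psi_cont _ (r0 j i)) /B /= in_itv /= andbT mulrAC.
  by rewrite /o; split => ?; lra.
have -> : [set w | forall j i, ((r j i)%:E <= u j i w)%E] =
    \bigcap_(k in [set: 'I_n * 'I_m]) ((Z k.1 k.2 : T -> R) @^-1` B k).
  apply/seteqP; split => w /= H; first by move=> k _; apply/le_u; exact: H.
  by move=> j i; apply/le_u; exact: (H (j, i)).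
rewrite indepZ; last by move=> k; exact: measurable_itv.
have Z_tail k : fine (P ((Z k.1 k.2 : T -> R) @^-1` B k)) = Phi tau.
  exact: normal_rv_upper_tail (divr_gt0 (sigma0 _) (mu0 _)) (distZ k.1 k.2).
under eq_bigr => k _ do rewrite Z_tail.
rewrite prodr_const card_prod !card_ord Phi_tau mulnC exprn_powR_natrV //.
  by lra.
by rewrite -lt0n muln_gt0 m0 n0.
Qed.
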